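(* Let $\beta>0$, $T>0$, $\lambda>0$, put $M=\beta T$, and let $B_M$ satisfy $0<B_M<\beta T$. Let $T_{\text{th}}=\dfrac{M}{\ln(1+M/\lambda)}$ and, for $x\ge 0$, $$P_{e|1}(x)=\sum_{y\in\mathbb{Z}_{\ge 0},\, y<T_{\text{th}}} e^{-(x+\lambda)}\frac{(x+\lambda)^y}{y!}.$$ Consider the optimization problem over real sequences $\{\Delta_i\}_{i=1}^\infty$: $$\min_{\{\Delta_i\}} F(\{\Delta_i\})=\sum_{j=1}^{\infty}\frac{1}{2^{j}}P_{e|1}(M+\Delta_j)\quad\text{s.t.}\quad B_M-\sum_{j=1}^{i}\Delta_j\ge 0\ \text{ and }\ \sum_{j=1}^{i}\Delta_j\ge 0\ \text{ for all } i\ge 1.$$ Then the optimal solution $\{\Delta^*_i\}_{i=1}^\infty$ of this problem is a decreasing (i.e. $\Delta^*_{i+1}\le \Delta^*_i$ for all $i$) sequence of nonnegative numbers.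
   Context: This is the ''no-ISI'' adaptive release-duration problem for a molecular transmitter with molecule production rate $\beta$, slot length $T$, storage capacity $B_M=\beta(T-T_M)$ (with $T_M$ the non-adaptive release duration); $\Delta_i$ is the increment of the number of released molecules (for bit ''1'') in state $s_{i-1}$, i.e. after $i-1$ consecutive ''1''s following the last ''0''. $P_{e|1}(x)$ is the probability that a Poisson$(x+\lambda)$ count falls below the fixed threshold $T_{\text{th}}$. The paper assumes $M\gg\lambda$, so that $T_{\text{th}}<M$. *)

From Stdlib Require Import Reals.
From Coquelicot Require Import Coquelicot.
Open Scope R_scope.

Definition Tth (M lambda : R) : R := M / ln (1 + M / lambda).

Definition Pe1 (M lambda x : R) : R :=
  Series (fun y : nat =>
    if Rlt_dec (INR y) (Tth M lambda)
    then exp (- (x + lambda)) * (x + lambda) ^ y / INR (Factorial.fact y)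
    else 0).

(* Objective F({Delta_i}) = sum_{j>=1} 2^{-j} P_{e|1}(M + Delta_j).
   Sequences are indexed from 1; Delta 0 is ignored. *)
Definition Fobj (M lambda : R) (Delta : nat -> R) : R :=
  Series (fun k : nat => (1/2) ^ (k + 1) * Pe1 M lambda (M + Delta (k + 1)%nat)).

Definition feasible (BM : R) (Delta : nat -> R) : Prop :=
  forall i : nat, (1 <= i)%nat ->
    BM - sum_n_m Delta 1 i >= 0 /\ sum_n_m Delta 1 i >= 0.

Definition optimal (M lambda BM : R) (Delta : nat -> R) : Prop :=
  feasible BM Delta /\
  forall Delta' : nat -> R, feasible BM Delta' -> Fobj M lambda Delta <= Fobj M lambda Delta'.

(* Let K be the largest integer below T_th, so that P_{e|1}(x) is the probability that a
   Poisson(x + lambda) variable is at most K; it decreases strictly in x, with derivative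
   -p_K(x + lambda), where p_K(mu) = e^{-mu} mu^K / K!.
   If Delta_i < 0, raise it with mass taken from the first later positive Delta_q (or from
   nowhere if there is none); the partial sums stay in [0, B_M]. The choice of T_th gives
   K ln(1 + M/lambda) < M, i.e. p_K(M + lambda) < p_K(lambda); as log p_K is concave, p_K is at
   least p_K(M + lambda) on [lambda, M + lambda] and at most p_K(M + lambda) beyond M + lambda,
   which lies past the mode K. Since 2^{-i} > 2^{-q}, the transfer strictly lowers F.
   If Delta_i < Delta_{i+1}, swapping the two keeps feasibility (as Delta_i >= 0) and puts the
   smaller error probability on the heavier weight. *)

From Stdlib Require Import Reals Lra Lia Factorial Classical Wf_nat.
From Coquelicot Require Import Coquelicot.
Open Scope R_scope.

Definition poisson_pmf (mu : R) (k : nat) : R := exp (- mu) * mu ^ k / INR (fact k).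

Definition poisson_cdf (K : nat) (mu : R) : R := sum_n (poisson_pmf mu) K.

Lemma poisson_cdf_S K mu : poisson_cdf (S K) mu = poisson_cdf K mu + poisson_pmf mu (S K).
Proof. unfold poisson_cdf. now rewrite sum_Sn. Qed.

Lemma INR_fact_pos k : 0 < INR (fact k).
Proof. apply lt_0_INR, lt_O_fact. Qed.

Lemma poisson_pmf_pos mu k : 0 < mu -> 0 < poisson_pmf mu k.
Proof.
  intros hmu. unfold poisson_pmf.
  pose proof (exp_pos (- mu)). pose proof (pow_lt mu k hmu). pose proof (INR_fact_pos k).
  apply Rdiv_lt_0_compat; nra.
Qed.

Lemma poisson_pmf_ge0 mu k : 0 <= mu -> 0 <= poisson_pmf mu k.
Proof.
  intros hmu. unfold poisson_pmf.
  pose proof (exp_pos (- mu)). pose proof (pow_le mu k hmu). pose proof (INR_fact_pos k).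
  apply Rdiv_le_0_compat; nra.
Qed.

Lemma is_derive_poisson_pmf_S k mu :
  is_derive (fun t => poisson_pmf t (S k)) mu (poisson_pmf mu k - poisson_pmf mu (S k)).
Proof.
  unfold poisson_pmf. auto_derive; [easy|].
  change (match k with 0%nat => 1 | S _ => INR k + 1 end) with (INR (S k)).
  rewrite fact_simpl, ?plus_INR, !mult_INR, S_INR.
  pose proof (INR_fact_pos k). pose proof (pos_INR k).
  simpl pow. field. repeat split; nra.
Qed.

Lemma is_derive_poisson_cdf K mu : is_derive (poisson_cdf K) mu (- poisson_pmf mu K).
Proof.
  induction K as [|K IH].
  - apply (is_derive_ext (fun t => exp (- t))).
    + intros t. unfold poisson_cdf, poisson_pmf. rewrite sum_O. simpl. field.
    + auto_derive; [easy|]. unfold poisson_pmf. simpl. field.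
  - apply (is_derive_ext (fun t => poisson_cdf K t + poisson_pmf t (S K))).
    + intros t. symmetry. apply poisson_cdf_S.
    + replace (- poisson_pmf mu (S K))
        with (- poisson_pmf mu K + (poisson_pmf mu K - poisson_pmf mu (S K))) by ring.
      apply (is_derive_plus (poisson_cdf K)); [exact IH|apply is_derive_poisson_pmf_S].
Qed.

Lemma poisson_cdf_mvt K a b : a <= b ->
  exists c, a <= c <= b /\ poisson_cdf K b - poisson_cdf K a = - poisson_pmf c K * (b - a).
Proof.
  intros hab.
  destruct (MVT_gen (poisson_cdf K) a b (fun x => - poisson_pmf x K)) as [c [hc e]].
  - intros x _. apply is_derive_poisson_cdf.
  - intros x _. apply continuity_pt_filterlim, (ex_derive_continuous (poisson_cdf K)).
    eexists. apply is_derive_poisson_cdf.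
  - rewrite Rmin_left, Rmax_right in hc by lra. exists c. auto.
Qed.

Lemma poisson_cdf_decr K a b : 0 < a -> a < b -> poisson_cdf K b < poisson_cdf K a.
Proof.
  intros ha hab. destruct (poisson_cdf_mvt K a b) as [c [hc e]]; [lra|].
  pose proof (poisson_pmf_pos c K ltac:(lra)). nra.
Qed.

Lemma poisson_cdf_0 K : poisson_cdf K 0 = 1.
Proof.
  induction K as [|K IH].
  - unfold poisson_cdf, poisson_pmf. rewrite sum_O. simpl. rewrite Ropp_0, exp_0. field.
  - rewrite poisson_cdf_S, IH. unfold poisson_pmf. simpl. field.
    exact (not_0_INR _ (fact_neq_0 (S K))).
Qed.

Lemma poisson_cdf_ge0 K mu : 0 <= mu -> 0 <= poisson_cdf K mu.
Proof.
  intros hmu. induction K as [|K IH].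
  - unfold poisson_cdf. rewrite sum_O. now apply poisson_pmf_ge0.
  - rewrite poisson_cdf_S. pose proof (poisson_pmf_ge0 mu (S K) hmu). lra.
Qed.

Lemma poisson_cdf_le1 K mu : 0 <= mu -> poisson_cdf K mu <= 1.
Proof.
  intros hmu. destruct (poisson_cdf_mvt K 0 mu hmu) as [c [hc e]].
  rewrite poisson_cdf_0 in e. pose proof (poisson_pmf_ge0 c K ltac:(lra)). nra.
Qed.

Lemma ln_le_sub1 x : 0 < x -> ln x <= x - 1.
Proof. intros hx. pose proof (exp_ineq1_le (ln x)). rewrite exp_ln in H by exact hx. lra. Qed.

Lemma ln_ratio_bounds a b : 0 < a -> 0 < b -> (b - a) / b <= ln (b / a) <= (b - a) / a.
Proof.
  intros ha hb. split.
  - pose proof (ln_le_sub1 (a / b) ltac:(apply Rdiv_lt_0_compat; lra)) as h.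
    rewrite ln_div in h |- * by lra.
    replace ((b - a) / b) with (- (a / b - 1)) by (field; lra). lra.
  - pose proof (ln_le_sub1 (b / a) ltac:(apply Rdiv_lt_0_compat; lra)) as h.
    replace ((b - a) / a) with (b / a - 1) by (field; lra). exact h.
Qed.

Lemma poisson_pmf_exp K x : 0 < x ->
  poisson_pmf x K = exp (INR K * ln x - x) / INR (fact K).
Proof.
  intros hx. unfold poisson_pmf, Rminus.
  rewrite Rplus_comm, exp_plus, <- ln_pow, exp_ln by (try apply pow_lt; lra).
  reflexivity.
Qed.

Lemma poisson_pmf_le K mu nu : 0 < mu -> 0 < nu ->
  INR K * ln (nu / mu) <= nu - mu -> poisson_pmf nu K <= poisson_pmf mu K.
Proof.
  intros hmu hnu h. rewrite ln_div in h by lra.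
  rewrite !poisson_pmf_exp by lra.
  apply Rmult_le_compat_r; [left; apply Rinv_0_lt_compat, INR_fact_pos|].
  destruct (Rle_lt_or_eq_dec (INR K * ln nu - nu) (INR K * ln mu - mu)) as [hlt|heq];
    [lra| |].
  - left. now apply exp_increasing.
  - right. now rewrite heq.
Qed.

Lemma poisson_pmf_antitone_after_mode K mu nu : 0 < mu -> INR K <= mu -> mu <= nu ->
  poisson_pmf nu K <= poisson_pmf mu K.
Proof.
  intros hmu hK hnu. apply poisson_pmf_le; [lra|lra|].
  pose proof (pos_INR K).
  destruct (ln_ratio_bounds mu nu hmu ltac:(lra)) as [_ hln].
  assert (hq : 0 <= (nu - mu) / mu) by (apply Rdiv_le_0_compat; lra).
  assert (e : nu - mu = mu * ((nu - mu) / mu)) by (field; lra).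
  apply Rle_trans with (INR K * ((nu - mu) / mu)); [now apply Rmult_le_compat_l|].
  nra.
Qed.

Lemma half_pow_lt p q : (p < q)%nat -> (1/2) ^ q < (1/2) ^ p.
Proof.
  intros hpq. replace q with (p + (q - p))%nat by lia. rewrite pow_add.
  pose proof (pow_lt_1_compat (1/2) (q - p) ltac:(lra) ltac:(lia)).
  pose proof (pow_lt (1/2) p ltac:(lra)). nra.
Qed.

Section PoissonMode.

Variables (lam nu : R) (K : nat).
(* [hK] says [poisson_pmf nu K <= poisson_pmf lam K]; by concavity of [log (poisson_pmf _ K)]
   the minimum over [lam, nu] is then attained at [nu]. *)
Hypotheses (hlam : 0 < lam) (hnu : lam < nu) (hK : INR K * ln (nu / lam) <= nu - lam).

Lemma mode_le_right_end : INR K <= nu.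
Proof.
  destruct (ln_ratio_bounds lam nu hlam ltac:(lra)) as [hln _].
  assert (hq : 0 < (nu - lam) / nu) by (apply Rdiv_lt_0_compat; lra).
  pose proof (pos_INR K).
  assert (INR K * ((nu - lam) / nu) <= nu * ((nu - lam) / nu)).
  { replace (nu * ((nu - lam) / nu)) with (nu - lam) by (field; lra).
    apply Rle_trans with (INR K * ln (nu / lam)); [apply Rmult_le_compat_l|]; lra. }
  nra.
Qed.

Lemma poisson_pmf_right_end_le mu : lam <= mu <= nu -> poisson_pmf nu K <= poisson_pmf mu K.
Proof.
  intros hmu. destruct (Rle_or_lt (INR K) mu) as [hKmu|hmuK].
  - apply poisson_pmf_antitone_after_mode; lra.
  - apply poisson_pmf_le; [lra|lra|].
    destruct (ln_ratio_bounds lam mu hlam ltac:(lra)) as [hln _].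
    replace (ln (nu / mu)) with (ln (nu / lam) - ln (mu / lam))
      by (rewrite !ln_div by lra; ring).
    assert (hq : 0 <= (mu - lam) / mu) by (apply Rdiv_le_0_compat; lra).
    assert (mu - lam <= INR K * ((mu - lam) / mu)).
    { replace (mu - lam) with (mu * ((mu - lam) / mu)) at 1 by (field; lra).
      apply Rmult_le_compat_r; lra. }
    pose proof (pos_INR K). nra.
Qed.

Lemma poisson_cdf_transfer p q a b eps : (p < q)%nat -> 0 < eps ->
  lam <= a -> a + eps <= nu -> nu <= b - eps ->
  (1/2) ^ p * (poisson_cdf K (a + eps) - poisson_cdf K a)
  + (1/2) ^ q * (poisson_cdf K (b - eps) - poisson_cdf K b) < 0.
Proof.
  intros hpq heps ha haeps hb.
  destruct (poisson_cdf_mvt K a (a + eps)) as [c1 [hc1 e1]]; [lra|].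
  destruct (poisson_cdf_mvt K (b - eps) b) as [c2 [hc2 e2]]; [lra|].
  assert (h1 : poisson_pmf nu K <= poisson_pmf c1 K) by (apply poisson_pmf_right_end_le; lra).
  assert (h2 : poisson_pmf c2 K <= poisson_pmf nu K)
    by (apply poisson_pmf_antitone_after_mode; [lra|pose proof mode_le_right_end; lra|lra]).
  pose proof (poisson_pmf_pos nu K ltac:(lra)).
  pose proof (half_pow_lt p q hpq). pose proof (pow_lt (1/2) q ltac:(lra)).
  assert ((1/2) ^ q * poisson_pmf c2 K < (1/2) ^ p * poisson_pmf c1 K).
  { apply Rle_lt_trans with ((1/2) ^ q * poisson_pmf nu K); [apply Rmult_le_compat_l; lra|].
    apply Rlt_le_trans with ((1/2) ^ p * poisson_pmf nu K); [apply Rmult_lt_compat_r; lra|].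
    apply Rmult_le_compat_l; lra. }
  replace (a + eps - a) with eps in e1 by ring.
  replace (b - (b - eps)) with eps in e2 by ring.
  replace (poisson_cdf K (b - eps) - poisson_cdf K b) with (poisson_pmf c2 K * eps) by lra.
  rewrite e1. nra.
Qed.

End PoissonMode.

Lemma is_series_finite_support (a : nat -> R) N :
  (forall k, (N < k)%nat -> a k = 0) -> is_series a (sum_n a N).
Proof.
  intros ha.
  assert (hconst : forall m, (N <= m)%nat -> sum_n a m = sum_n a N).
  { intros m hm. induction hm as [|m hm IH]; [reflexivity|].
    rewrite sum_Sn, IH, (ha (S m)) by lia. apply Rplus_0_r. }
  enough (h : is_lim_seq (sum_n a) (sum_n a N)) by exact h.
  apply (is_lim_seq_ext_loc (fun _ => sum_n a N)); [|apply is_lim_seq_const].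
  exists N. intros m hm. symmetry. now apply hconst.
Qed.

Lemma sum_n_update (a b : nat -> R) n m : (forall k, k <> n -> b k = a k) -> (n <= m)%nat ->
  sum_n b m = sum_n a m + (b n - a n).
Proof.
  intros hab hm. induction hm as [|m hm IH].
  - destruct n as [|n]; [rewrite !sum_O; simpl; ring|].
    rewrite !sum_Sn, (sum_n_ext_loc b a) by (intros k hk; apply hab; lia).
    unfold plus; simpl; ring.
  - rewrite !sum_Sn, IH, (hab (S m)) by lia. unfold plus; simpl; ring.
Qed.

Lemma is_series_update (a b : nat -> R) n l : is_series a l ->
  (forall k, k <> n -> b k = a k) -> is_series b (l + (b n - a n)).
Proof.
  intros ha hab.
  enough (h : is_lim_seq (sum_n b) (l + (b n - a n))) by exact h.
  apply (is_lim_seq_ext_loc (fun m => sum_n a m + (b n - a n))).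
  - exists n. intros m hm. symmetry. now apply sum_n_update.
  - apply is_lim_seq_plus'; [exact ha|apply is_lim_seq_const].
Qed.

Lemma Series_update (a b : nat -> R) n : ex_series a ->
  (forall k, k <> n -> b k = a k) -> ex_series b /\ Series b = Series a + (b n - a n).
Proof.
  intros [l ha] hab. pose proof (is_series_update a b n l ha hab) as hb.
  split; [eexists; exact hb|]. now rewrite (is_series_unique b _ hb), (is_series_unique a l ha).
Qed.

Lemma ln_one_plus_pos M lam : 0 < M -> 0 < lam -> 0 < ln (1 + M / lam).
Proof.
  intros hM hlam. rewrite <- ln_1. apply ln_increasing; [lra|].
  pose proof (Rdiv_lt_0_compat M lam hM hlam). lra.
Qed.

Lemma Tth_pos M lam : 0 < M -> 0 < lam -> 0 < Tth M lam.
Proof. intros hM hlam. apply Rdiv_lt_0_compat; [exact hM|]. now apply ln_one_plus_pos. Qed.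

Lemma nat_below_bound (T : R) : 0 < T -> exists K, forall y, INR y < T <-> (y <= K)%nat.
Proof.
  intros hT. destruct (nfloor1_ex T hT) as [K [hK1 hK2]]. exists K. intros y. split.
  - intros hy. destruct (Compare_dec.le_lt_dec y K) as [l|l]; [exact l|].
    apply le_INR in l. rewrite S_INR in l. lra.
  - intros hy. apply le_INR in hy. lra.
Qed.

Definition psum (D : nat -> R) (j : nat) : R := sum_n_m D 1 j.

Definition add_at (D : nat -> R) (p : nat) (u : R) : nat -> R :=
  fun l => if Nat.eqb l p then D l + u else D l.

Definition Fterm (M lam : R) (D : nat -> R) (k : nat) : R :=
  (1/2) ^ (k + 1) * Pe1 M lam (M + D (k + 1)%nat).

Lemma psum_0 D : psum D 0 = 0.
Proof. unfold psum. rewrite sum_n_m_zero by lia. reflexivity. Qed.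

Lemma psum_S D j : psum D (S j) = psum D j + D (S j).
Proof. unfold psum. rewrite sum_n_Sm by lia. reflexivity. Qed.

Lemma feasible_iff BM D : 0 <= BM -> feasible BM D <-> forall j, 0 <= psum D j <= BM.
Proof.
  intros hBM. split.
  - intros hf [|j]; [rewrite psum_0; lra|].
    destruct (hf (S j) ltac:(lia)). unfold psum. lra.
  - intros hj i _. specialize (hj i). unfold psum in hj. lra.
Qed.

Lemma feasible_entry_ge BM D i : 0 <= BM -> feasible BM D -> (1 <= i)%nat -> - BM <= D i.
Proof.
  intros hBM hf hi. rewrite feasible_iff in hf by exact hBM.
  destruct i as [|j]; [lia|].
  pose proof (psum_S D j). pose proof (hf j). pose proof (hf (S j)). lra.
Qed.

Lemma add_at_eq D p u : add_at D p u p = D p + u.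
Proof. unfold add_at. now rewrite Nat.eqb_refl. Qed.

Lemma add_at_ne D p u l : l <> p -> add_at D p u l = D l.
Proof. intros hl. unfold add_at. now destruct (Nat.eqb_spec l p). Qed.

Lemma psum_add_at D p u j : (1 <= p)%nat ->
  psum (add_at D p u) j = psum D j + (if Nat.leb p j then u else 0).
Proof.
  intros hp. induction j as [|j IH].
  - rewrite !psum_0. destruct (Nat.leb_spec p 0); [lia|ring].
  - rewrite !psum_S, IH. unfold add_at.
    destruct (Nat.eqb_spec (S j) p), (Nat.leb_spec p j), (Nat.leb_spec p (S j)); try lia; ring.
Qed.

Lemma psum_le_of_nonpos D i j : (forall l, (i < l <= j)%nat -> D l <= 0) -> (i <= j)%nat ->
  psum D j <= psum D i.
Proof.
  intros hD hij. induction hij as [|j hij IH]; [lra|].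
  rewrite psum_S. assert (D (S j) <= 0) by (apply hD; lia).
  assert (psum D j <= psum D i) by (apply IH; intros l hl; apply hD; lia). lra.
Qed.

Lemma exists_first_positive D i : (exists q, (i < q)%nat /\ 0 < D q) ->
  exists r, (i < r)%nat /\ 0 < D r /\ forall l, (i < l < r)%nat -> D l <= 0.
Proof.
  intros hex.
  destruct (dec_inh_nat_subset_has_unique_least_element (fun r => (i < r)%nat /\ 0 < D r)
              (fun r => classic _) hex) as [r [[[hir hr] hmin] _]].
  exists r. split; [exact hir|]. split; [exact hr|].
  intros l hl. destruct (Rle_or_lt (D l) 0) as [hle|hlt]; [exact hle|].
  specialize (hmin l (conj (proj1 hl) hlt)). lia.
Qed.

Section Optimality.

Variables (M lam : R) (K : nat).
Hypotheses (hM : 0 < M) (hlam : 0 < lam)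
  (hK : forall y, INR y < Tth M lam <-> (y <= K)%nat).

Lemma Pe1_cdf x : Pe1 M lam (M + x) = poisson_cdf K (M + lam + x).
Proof.
  unfold Pe1. erewrite is_series_unique; [|apply (is_series_finite_support _ K)].
  - apply sum_n_ext_loc. intros y hy.
    destruct (Rlt_dec (INR y) (Tth M lam)) as [_|hy']; [|exfalso; apply hy', hK, hy].
    unfold poisson_pmf. now replace (M + x + lam) with (M + lam + x) by ring.
  - intros y hy. destruct (Rlt_dec (INR y) (Tth M lam)) as [hy'|_]; [|reflexivity].
    apply hK in hy'. lia.
Qed.

Lemma threshold_ln_bound : INR K * ln ((M + lam) / lam) <= (M + lam) - lam.
Proof.
  assert (hlt : INR K < Tth M lam) by (apply hK; lia).
  unfold Tth in hlt. pose proof (ln_one_plus_pos M lam hM hlam) as hln.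
  replace ((M + lam) / lam) with (1 + M / lam) by (field; lra).
  apply (Rmult_lt_compat_r (ln (1 + M / lam))) in hlt; [|exact hln].
  replace (M / ln (1 + M / lam) * ln (1 + M / lam)) with M in hlt by (field; lra).
  lra.
Qed.

Lemma Pe1_bounds x : - M <= x -> 0 <= Pe1 M lam (M + x) <= 1.
Proof.
  intros hx. rewrite Pe1_cdf.
  split; [apply poisson_cdf_ge0|apply poisson_cdf_le1]; lra.
Qed.

Lemma Pe1_decr x y : - M <= x -> x < y -> Pe1 M lam (M + y) < Pe1 M lam (M + x).
Proof. intros hx hxy. rewrite !Pe1_cdf. apply poisson_cdf_decr; lra. Qed.

Lemma Pe1_transfer p q x y eps : (p < q)%nat -> 0 < eps ->
  - M <= x -> x + eps <= 0 -> eps <= y ->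
  (1/2) ^ p * (Pe1 M lam (M + (x + eps)) - Pe1 M lam (M + x))
  + (1/2) ^ q * (Pe1 M lam (M + (y + - eps)) - Pe1 M lam (M + y)) < 0.
Proof.
  intros hpq heps hx hxeps hy. rewrite !Pe1_cdf.
  replace (M + lam + (x + eps)) with ((M + lam + x) + eps) by ring.
  replace (M + lam + (y + - eps)) with ((M + lam + y) - eps) by ring.
  apply (poisson_cdf_transfer lam (M + lam) K hlam ltac:(lra) threshold_ln_bound);
    [exact hpq|lra..].
Qed.

Variable BM : R.
Hypotheses (hBM0 : 0 < BM) (hBM1 : BM < M).

Lemma ex_series_Fterm D : feasible BM D -> ex_series (Fterm M lam D).
Proof.
  intros hf.
  apply (ex_series_le (K := R_AbsRing) (V := R_CompleteNormedModule) _
           (fun k => (1/2) * (1/2) ^ k)).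
  - intros k. change (norm (Fterm M lam D k)) with (Rabs (Fterm M lam D k)). unfold Fterm.
    pose proof (feasible_entry_ge BM D (k + 1) ltac:(lra) hf ltac:(lia)).
    pose proof (Pe1_bounds (D (k + 1)%nat) ltac:(lra)).
    pose proof (pow_lt (1/2) k ltac:(lra)).
    rewrite pow_add. simpl. rewrite Rabs_pos_eq by nra. nra.
  - apply (ex_series_scal_l (V := R_NormedModule) (1/2) (fun k => (1/2) ^ k)).
    eexists. apply is_series_geom. rewrite Rabs_pos_eq; lra.
Qed.

Lemma Fobj_add_at D p u : ex_series (Fterm M lam D) -> (1 <= p)%nat ->
  ex_series (Fterm M lam (add_at D p u)) /\
  Fobj M lam (add_at D p u)
  = Fobj M lam D + (1/2) ^ p * (Pe1 M lam (M + (D p + u)) - Pe1 M lam (M + D p)).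
Proof.
  intros hD hp.
  change (Fobj M lam ?E) with (Series (Fterm M lam E)).
  destruct (Series_update (Fterm M lam D) (Fterm M lam (add_at D p u)) (p - 1) hD) as [hex hS].
  - intros k hk. unfold Fterm. rewrite add_at_ne by lia. reflexivity.
  - split; [exact hex|]. rewrite hS. unfold Fterm.
    replace (p - 1 + 1)%nat with p by lia. rewrite add_at_eq. ring.
Qed.

Lemma optimal_add_at D p u : optimal M lam BM D -> (1 <= p)%nat ->
  feasible BM (add_at D p u) ->
  0 <= (1/2) ^ p * (Pe1 M lam (M + (D p + u)) - Pe1 M lam (M + D p)).
Proof.
  intros [hf hmin] hp hf'. specialize (hmin _ hf').
  destruct (Fobj_add_at D p u (ex_series_Fterm D hf) hp) as [_ e]. lra.
Qed.

Lemma optimal_add_at2 D p q u v : optimal M lam BM D -> (1 <= p)%nat -> (1 <= q)%nat -> p <> q ->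
  feasible BM (add_at (add_at D p u) q v) ->
  0 <= (1/2) ^ p * (Pe1 M lam (M + (D p + u)) - Pe1 M lam (M + D p))
     + (1/2) ^ q * (Pe1 M lam (M + (D q + v)) - Pe1 M lam (M + D q)).
Proof.
  intros [hf hmin] hp hq hpq hf'. specialize (hmin _ hf').
  destruct (Fobj_add_at D p u (ex_series_Fterm D hf) hp) as [hex e1].
  destruct (Fobj_add_at (add_at D p u) q v hex hq) as [_ e2].
  rewrite add_at_ne in e2 by lia. lra.
Qed.

Lemma optimal_no_deficit_before_surplus D i q : optimal M lam BM D -> (1 <= i)%nat ->
  D i < 0 -> (i < q)%nat -> 0 < D q -> (forall l, (i < l < q)%nat -> D l <= 0) -> False.
Proof.
  intros hopt hi hDi hiq hDq hmid. pose proof (proj1 hopt) as hf.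
  set (eps := Rmin (- D i) (D q)).
  assert (heps1 : eps <= - D i) by apply Rmin_l.
  assert (heps2 : eps <= D q) by apply Rmin_r.
  assert (heps0 : 0 < eps) by (apply Rmin_glb_lt; lra).
  assert (hlow : - BM <= D i) by (apply feasible_entry_ge; [lra|exact hf|exact hi]).
  assert (hf' : feasible BM (add_at (add_at D i eps) q (- eps))).
  { rewrite feasible_iff in hf |- * by lra. intros j.
    rewrite !psum_add_at by lia. pose proof (hf j) as hj.
    destruct (Nat.leb_spec i j), (Nat.leb_spec q j); try lia; try lra.
    assert (psum D j <= psum D i) by (apply psum_le_of_nonpos; [intros l hl; apply hmid|]; lia).
    destruct i as [|i]; [lia|]. rewrite psum_S in *. pose proof (hf i). lra. }
  pose proof (optimal_add_at2 D i q eps (- eps) hopt hi ltac:(lia) ltac:(lia) hf').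
  pose proof (Pe1_transfer i q (D i) (D q) eps hiq heps0 ltac:(lra) ltac:(lra) heps2).
  lra.
Qed.

Lemma optimal_no_deficit_in_nonpos_tail D i : optimal M lam BM D -> (1 <= i)%nat ->
  D i < 0 -> (forall l, (i < l)%nat -> D l <= 0) -> False.
Proof.
  intros hopt hi hDi htail. pose proof (proj1 hopt) as hf.
  assert (hlow : - BM <= D i) by (apply feasible_entry_ge; [lra|exact hf|exact hi]).
  assert (hf' : feasible BM (add_at D i (- D i))).
  { rewrite feasible_iff in hf |- * by lra. intros j.
    rewrite psum_add_at by lia. pose proof (hf j) as hj.
    destruct (Nat.leb_spec i j); try lra.
    assert (psum D j <= psum D i) by (apply psum_le_of_nonpos; [intros l hl; apply htail|]; lia).
    destruct i as [|i]; [lia|]. rewrite psum_S in *. pose proof (hf i). lra. }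
  pose proof (optimal_add_at D i (- D i) hopt hi hf') as hgain.
  replace (D i + - D i) with 0 in hgain by ring.
  pose proof (Pe1_decr (D i) 0 ltac:(lra) hDi). pose proof (pow_lt (1/2) i ltac:(lra)).
  nra.
Qed.

Lemma optimal_ge0 D i : optimal M lam BM D -> (1 <= i)%nat -> 0 <= D i.
Proof.
  intros hopt hi. destruct (Rle_or_lt 0 (D i)) as [hge|hDi]; [exact hge|exfalso].
  destruct (classic (exists q, (i < q)%nat /\ 0 < D q)) as [hex|hnone].
  - destruct (exists_first_positive D i hex) as [q [hiq [hDq hmid]]].
    exact (optimal_no_deficit_before_surplus D i q hopt hi hDi hiq hDq hmid).
  - apply (optimal_no_deficit_in_nonpos_tail D i hopt hi hDi).
    intros l hl. destruct (Rle_or_lt (D l) 0) as [hle|hpos]; [exact hle|].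
    exfalso. apply hnone. now exists l.
Qed.

Lemma optimal_antitone D i : optimal M lam BM D -> (1 <= i)%nat -> D (S i) <= D i.
Proof.
  intros hopt hi. destruct (Rle_or_lt (D (S i)) (D i)) as [hle|hlt]; [exact hle|exfalso].
  pose proof (proj1 hopt) as hf. pose proof (optimal_ge0 D i hopt hi) as hDi.
  set (d := D (S i) - D i).
  assert (hf' : feasible BM (add_at (add_at D i d) (S i) (- d))).
  { rewrite feasible_iff in hf |- * by lra. intros j.
    rewrite !psum_add_at by lia. pose proof (hf j).
    destruct (Nat.leb_spec i j), (Nat.leb_spec (S i) j); try lia; try lra.
    assert (j = i) by lia. subst j. pose proof (hf (S i)). rewrite psum_S in *. unfold d. lra. }
  pose proof (optimal_add_at2 D i (S i) d (- d) hopt hi ltac:(lia) ltac:(lia) hf') as hgain.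
  replace (D i + d) with (D (S i)) in hgain by (unfold d; ring).
  replace (D (S i) + - d) with (D i) in hgain by (unfold d; ring).
  pose proof (Pe1_decr (D i) (D (S i)) ltac:(lra) hlt). pose proof (pow_lt (1/2) i ltac:(lra)).
  simpl pow in hgain. nra.
Qed.

End Optimality.

Theorem lemma1 (beta T lambda BM : R) (Delta : nat -> R)
  (hbeta : 0 < beta) (hT : 0 < T) (hlambda : 0 < lambda)
  (hBM0 : 0 < BM) (hBM1 : BM < beta * T)
  (hopt : optimal (beta * T) lambda BM Delta) :
  forall i : nat, (1 <= i)%nat -> 0 <= Delta i /\ Delta (S i) <= Delta i.
Proof.
  assert (hM : 0 < beta * T) by now apply Rmult_lt_0_compat.
  destruct (nat_below_bound _ (Tth_pos _ _ hM hlambda)) as [K hK].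
  intros i hi. split.
  - exact (optimal_ge0 _ _ K hM hlambda hK BM hBM0 hBM1 Delta i hopt hi).
  - exact (optimal_antitone _ _ K hM hlambda hK BM hBM0 hBM1 Delta i hopt hi).
Qed.
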